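(* If $m>n\ge 1$ are natural numbers, then $\mathrm{Log}_{>1}(\mathbb{R}^n)\not\subseteq \mathrm{Log}_{>1}(\mathbb{R}^m)$. Consequently, the logics $\mathrm{Log}_{>1}(\mathbb{R}^n)$, $n\ge 1$, are pairwise distinct.
   Context: Modal formulas are built from a countable set of propositional variables using $\bot$, $\to$ and one unary modality $\lozenge$. A frame is a pair $(X,R)$; a valuation assigns subsets of $X$ to variables; $x\models\lozenge\varphi$ iff there is $y$ with $xRy$ and $y\models\varphi$. A formula is valid in a frame if true at every point under every valuation. For a metric space $(X,d)$, $\mathrm{Log}_{>1}(X)$ is the set of modal formulas valid in the frame $(X,R_{>1})$, where $xR_{>1}y$ iff $d(x,y)>1$. $\mathbb{R}^n$ carries the Euclidean metric. *)

From mathcomp Require Import all_boot.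
From Stdlib Require Import Reals.
Open Scope R_scope.

Inductive form : Type :=
  | Var : nat -> form
  | Bot : form
  | Imp : form -> form -> form
  | Dia : form -> form.

Fixpoint sat {X : Type} (Rel : X -> X -> Prop) (V : nat -> X -> Prop)
  (x : X) (phi : form) : Prop :=
  match phi with
  | Var p => V p x
  | Bot => False
  | Imp a b => sat Rel V x a -> sat Rel V x b
  | Dia a => exists y, Rel x y /\ sat Rel V y a
  end.

Definition valid_in {X : Type} (Rel : X -> X -> Prop) (phi : form) : Prop :=
  forall (V : nat -> X -> Prop) (x : X), sat Rel V x phi.

Definition Rn (n : nat) : Type := 'I_n -> R.

Definition euclid_dist (n : nat) (x y : Rn n) : R :=
  sqrt (\big[Rplus/0]_(i < n) ((x i - y i) * (x i - y i))).

Definition R_gt1 (n : nat) (x y : Rn n) : Prop := euclid_dist n x y > 1.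

Definition Log_gt1 (n : nat) (phi : form) : Prop := valid_in (R_gt1 n) phi.

(* In R^n every point is reachable from every other in two R_{>1}-steps, so
   [ball_form s] holds (anywhere) iff the sets V_p, p in s, fit in one closed unit
   ball, and [helly_form k] says: if any k-1 of the k sets V_0, ..., V_{k-1} fit
   in a unit ball, then all of them do.  For k >= n+2 this holds in R^n by Helly's
   theorem (proved from Radon's theorem) applied to the convex sets of admissible
   centres.  In R^m it fails for k = m+1: the vertices of a suitably scaled
   regular simplex have all facets in unit balls, but the whole simplex is not. *)

From Pilot Require Import Defs.
From Stdlib Require Import Reals Classical IndefiniteDescription.
From mathcomp Require Import all_boot all_order all_algebra.
From mathcomp Require Import Rstruct ring lra.
Import Order.TTheory GRing.Theory Num.Theory.
Set Implicit Arguments.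
Unset Strict Implicit.
Unset Printing Implicit Defensive.
Local Open Scope ring_scope.

Section ConvexGeometry.
Variable F : realFieldType.

Definition sqdist {n} (x y : 'I_n -> F) : F := \sum_(j < n) (x j - y j) ^+ 2.

Definition convex_comb {k n} (P : pred 'I_k) (x : 'I_k -> 'I_n -> F) (p : 'I_n -> F) :=
  exists w : 'I_k -> F, [/\ forall i, P i -> 0 <= w i, \sum_(i | P i) w i = 1 &
    forall j, p j = \sum_(i | P i) w i * x i j].

Definition convex {n} (C : ('I_n -> F) -> Prop) :=
  forall k (P : pred 'I_k) x p, (forall i, P i -> C (x i)) -> convex_comb P x p -> C p.

Lemma sqr_sub_le_sqdist n (x y : 'I_n -> F) j : (x j - y j) ^+ 2 <= sqdist x y.
Proof. by rewrite /sqdist (bigD1 j) //= lerDl sumr_ge0 // => i _; apply: sqr_ge0. Qed.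

Lemma sqr_convex_comb_le k (P : pred 'I_k) (w y : 'I_k -> F) :
  (forall i, P i -> 0 <= w i) -> \sum_(i | P i) w i = 1 ->
  (\sum_(i | P i) w i * y i) ^+ 2 <= \sum_(i | P i) w i * y i ^+ 2.
Proof.
move=> w_ge0 w_sum1; set mu := \sum_(i | P i) w i * y i.
have var_ge0 : 0 <= \sum_(i | P i) w i * (y i - mu) ^+ 2.
  by apply: sumr_ge0 => i Pi; rewrite mulr_ge0 ?w_ge0 ?sqr_ge0.
have var_eq : \sum_(i | P i) w i * (y i - mu) ^+ 2 =
    \sum_(i | P i) w i * y i ^+ 2 - 2 * mu * mu + mu ^+ 2 * \sum_(i | P i) w i.
  rewrite (eq_bigr (fun i => w i * y i ^+ 2 - 2 * mu * (w i * y i) + mu ^+ 2 * w i));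
    last by move=> i _; ring.
  by rewrite !big_split /= sumrN -!mulr_sumr.
by move: var_ge0; rewrite var_eq w_sum1; lra.
Qed.

Lemma convex_sqdist_ball n (a : 'I_n -> F) (r : F) :
  convex (fun c => sqdist c a <= r).
Proof.
move=> k P x p x_in [w [w_ge0 w_sum1 p_eq]].
apply: (@le_trans _ _ (\sum_(i | P i) w i * sqdist (x i) a)).
  rewrite /sqdist; under [X in _ <= X]eq_bigr do rewrite mulr_sumr.
  rewrite exchange_big /=; apply: ler_sum => j _; rewrite p_eq.
  have -> : \sum_(i | P i) w i * x i j - a j = \sum_(i | P i) w i * (x i j - a j).
    rewrite [in RHS](eq_bigr (fun i => w i * x i j - w i * a j));
      last by move=> i _; ring.
    by rewrite sumrB -mulr_suml w_sum1 mul1r.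
  exact: sqr_convex_comb_le.
apply: (@le_trans _ _ (\sum_(i | P i) w i * r)); last by rewrite -mulr_suml w_sum1 mul1r.
by apply: ler_sum => i Pi; rewrite ler_wpM2l ?w_ge0 ?x_in.
Qed.

Lemma affine_dependence k n (x : 'I_k -> 'I_n -> F) : (n.+1 < k)%N ->
  exists lam : 'I_k -> F, [/\ exists i, lam i != 0, \sum_i lam i = 0 &
    forall j, \sum_i lam i * x i j = 0].
Proof.
move=> n_lt_k.
pose B := row_mx (\matrix_(i, j) x i j) (const_mx 1 : 'M[F]_(k, 1)).
have : kermx B != 0.
  rewrite -mxrank_eq0 mxrank_ker -lt0n subn_gt0.
  by apply: leq_ltn_trans (rank_leq_col B) _; rewrite addn1.
have := mulmx_ker B; move: (kermx B) => K kerB /matrix0Pn [i0 [j0 nz]].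
exists (K i0); split; first by exists j0.
  have := congr1 (fun M : 'M[F]_(k, n + 1) => M i0 (rshift n (0 : 'I_1))) kerB.
  rewrite !mxE => {2}<-; apply: eq_bigr => l _; by rewrite row_mxEr mxE mulr1.
move=> j; have := congr1 (fun M : 'M[F]_(k, n + 1) => M i0 (lshift 1 j)) kerB.
by rewrite !mxE => {2}<-; apply: eq_bigr => l _; rewrite row_mxEl mxE.
Qed.

Lemma radon k n (x : 'I_k -> 'I_n -> F) : (n.+1 < k)%N ->
  exists P p, convex_comb P x p /\ convex_comb (predC P) x p.
Proof.
move=> n_lt_k; have [lam [[i1 lam_i1] lam_sum0 lam_x0]] := affine_dependence x n_lt_k.
pose P i := 0 < lam i; set S := \sum_(i | P i) lam i.
have split_sum0 (f : 'I_k -> F) :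
    \sum_i f i = 0 -> \sum_(i | ~~ P i) f i = - \sum_(i | P i) f i.
  by rewrite (bigID P predT) /= => /eqP; rewrite addrC addr_eq0 => /eqP.
have [i0 lam_i0] : exists i0, 0 < lam i0.
  apply/existsP; apply: contraNT lam_i1 => /existsPn no_pos.
  have lam_le0 i : true -> 0 <= - lam i.
    by move=> _; rewrite oppr_ge0 leNgt no_pos.
  have nlam_sum0 : \sum_i - lam i = 0 by rewrite sumrN lam_sum0 oppr0.
  by have /eqP := psumr_eq0P lam_le0 nlam_sum0 (i := i1) isT; rewrite oppr_eq0.
have S_gt0 : 0 < S.
  rewrite /S (bigD1 i0) //= ltr_pwDl //.
  by apply: sumr_ge0 => i /andP [Pi _]; apply: ltW.
exists P, (fun j => (\sum_(i | P i) lam i * x i j) / S); split.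
  exists (fun i => lam i / S); split => [i Pi||j]; first by rewrite divr_ge0 // ltW.
    by rewrite -mulr_suml divff // gt_eqF.
  by rewrite mulr_suml; apply: eq_bigr => i _; rewrite mulrAC.
exists (fun i => - lam i / S); split => [i /= nPi||j].
- by rewrite divr_ge0 ?(ltW S_gt0) // oppr_ge0 leNgt.
- by rewrite -mulr_suml sumrN split_sum0 // opprK divff // gt_eqF.
- rewrite [RHS](eq_bigr (fun i => - (lam i * x i j) / S)) /=; last by move=> i _; ring.
  by rewrite -mulr_suml sumrN split_sum0 ?opprK.
Qed.

Lemma helly k n (C : 'I_k -> ('I_n -> F) -> Prop) : (n.+1 < k)%N ->
  (forall l, convex (C l)) -> (forall i, exists x, forall l, l != i -> C l x) ->
  exists x, forall l, C l x.
Proof.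
move=> n_lt_k C_convex /functional_choice [x x_in].
have [P [p [comb_P comb_nP]]] := radon x n_lt_k.
exists p => l; case: (boolP (P l)) => Pl.
- by apply: C_convex comb_nP => i nPi; apply: x_in; apply: contraNneq nPi => <-.
- by apply: C_convex comb_P => i Pi; apply: x_in; apply: contraNneq Pl => ->.
Qed.

Lemma sum_sqdist_centered N n (q : 'I_N -> 'I_n -> F) (c : 'I_n -> F) :
  (forall j, \sum_l q l j = 0) ->
  \sum_l sqdist c (q l) = N%:R * \sum_j c j ^+ 2 + \sum_l \sum_j q l j ^+ 2.
Proof.
move=> q_sum0; rewrite /sqdist exchange_big [X in _ + X]exchange_big /=.
rewrite mulr_sumr -big_split /=; apply: eq_bigr => j _.
rewrite (eq_bigr (fun l => c j ^+ 2 - 2 * c j * q l j + q l j ^+ 2));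
  last by move=> l _; ring.
by rewrite !big_split /= sumrN sumr_const card_ord -mulr_sumr q_sum0 mulr_natl; ring.
Qed.

End ConvexGeometry.

Lemma sum_indicator (R : pzSemiRingType) m i :
  \sum_(j < m) ((i == j :> nat)%:R : R) = (i < m)%:R.
Proof.
case: (ltnP i m) => [i_lt_m | m_le_i].
  rewrite (bigD1 (Ordinal i_lt_m)) //= eqxx big1 ?addr0 // => j j_neq_i.
  suff /negbTE -> : (i != j :> nat) by [].
  by apply: contraNneq j_neq_i => eq_ij; apply/eqP/val_inj.
by rewrite big1 // => j _; rewrite gtn_eqF // (leq_trans (ltn_ord j)).
Qed.

Lemma sum_indicators_sqr (R : comPzRingType) m i k (a b c : R) : i != k ->
  \sum_(j < m) (a * (i == j :> nat)%:R + b * (k == j :> nat)%:R + c) ^+ 2 =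
  (i < m)%:R * (a ^+ 2 + 2 * a * c) + (k < m)%:R * (b ^+ 2 + 2 * b * c) + m%:R * c ^+ 2.
Proof.
move=> i_neq_k.
rewrite (eq_bigr (fun j : 'I_m => (i == j :> nat)%:R * (a ^+ 2 + 2 * a * c) +
   (k == j :> nat)%:R * (b ^+ 2 + 2 * b * c) + c ^+ 2)); last first.
  move=> j _; case: (i =P j) => [<-|_]; last by case: (k == j :> nat) => /=; ring.
  by rewrite eq_sym (negbTE i_neq_k) /=; ring.
by rewrite !big_split /= -!mulr_suml !sum_indicator sumr_const card_ord -mulr_natl; ring.
Qed.

Section RegularSimplex.
Variables (F : rcfType) (m : nat).
Hypothesis m_gt1 : (1 < m)%N.
Local Notation M := (m%:R : F).

Definition simplex_apex : F := Num.sqrt (M + 1)^-1.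
Definition simplex_scale : F := Num.sqrt (M / (M - 1)).
Definition simplex_shift l : F :=
  if (l < m)%N then (1 - simplex_apex) / M else simplex_apex.
Local Notation r := simplex_apex.
Local Notation t := simplex_scale.
Local Notation shift := simplex_shift.

(* A regular simplex centred at 0: vertex l is t (e_l - g 1) with g = (1 - r) / m
   for l < m, and -t r 1 for l = m.  The scale t makes every facet circumradius 1,
   attained at [facet_center k] = -(vertex k) / m, while every vertex has squared
   norm m^2 / (m^2 - 1) > 1, which [sum_sqdist_centered] turns into the absence
   of a common unit ball. *)
Definition simplex_vertex (l : nat) : 'I_m -> F :=
  fun j => t * ((l == j :> nat)%:R - shift l).

Definition facet_center (l : nat) : 'I_m -> F := fun j => - simplex_vertex l j / M.

Let M_gt1 : 1 < M. Proof. by rewrite ltr1n. Qed.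

Let r_sqr : r ^+ 2 = (M + 1)^-1.
Proof. have M1 := M_gt1; rewrite sqr_sqrtr // invr_ge0; lra. Qed.

Let t_sqr : t ^+ 2 = M / (M - 1).
Proof. have M1 := M_gt1; rewrite sqr_sqrtr // divr_ge0 //; lra. Qed.

Lemma simplex_centroid j : \sum_(l < m.+1) simplex_vertex l j = 0.
Proof.
have M1 := M_gt1.
rewrite big_ord_recr /= /simplex_vertex /simplex_shift ltnn gtn_eqF //.
under eq_bigr do rewrite ltn_ord eq_sym.
rewrite -mulr_sumr sumrB sum_indicator ltn_ord sumr_const card_ord -mulr_natl /=.
by field; apply/eqP; lra.
Qed.

Lemma sum_simplex_vertex_sqr j : \sum_(l < m.+1) simplex_vertex l j ^+ 2 = t ^+ 2.
Proof.
have M1 := M_gt1.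
rewrite big_ord_recr /= {2}/simplex_vertex /simplex_shift ltnn gtn_eqF //.
rewrite (eq_bigr (fun l : 'I_m => (t * (j == l :> nat)%:R + 0 * (m == l :> nat)%:R
   + - (t * ((1 - r) / M))) ^+ 2)); last first.
  by move=> l _; rewrite /simplex_vertex /simplex_shift ltn_ord eq_sym; ring.
rewrite sum_indicators_sqr ?ltn_eqF // ltn_ord ltnn /=.
transitivity (t ^+ 2 * (1 - (1 - r ^+ 2) / M + r ^+ 2)).
  by field; apply/eqP; lra.
by rewrite r_sqr; field; apply/andP; split; apply/eqP; lra.
Qed.

Lemma simplex_not_in_unit_ball (c : 'I_m -> F) :
  ~ (forall l, (l <= m)%N -> sqdist c (simplex_vertex l) <= 1).
Proof.
move=> c_near; have M1 := M_gt1.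
have sum_le : \sum_(l < m.+1) sqdist c (simplex_vertex l) <= M + 1.
  apply: le_trans (_ : \sum_(l < m.+1) 1 <= _).
    by apply: ler_sum => l _; apply: c_near; rewrite -ltnS.
  by rewrite sumr_const card_ord -natr1.
move: sum_le; rewrite sum_sqdist_centered; last exact: simplex_centroid.
rewrite exchange_big [X in _ + X <= _](eq_bigr (fun _ => t ^+ 2)) => [|j _];
  last exact: sum_simplex_vertex_sqr.
rewrite sumr_const card_ord t_sqr -natr1.
have c_ge0 : 0 <= \sum_j c j ^+ 2 by apply: sumr_ge0 => j _; apply: sqr_ge0.
have excess : (M / (M - 1)) *+ m = M + 1 + (M - 1)^-1.
  by rewrite -mulr_natl; field; apply/eqP; lra.
have inv_gt0 : 0 < (M - 1)^-1 by rewrite invr_gt0; lra.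
have lhs_ge0 : 0 <= (M + 1) * \sum_j c j ^+ 2 by rewrite mulr_ge0 //; lra.
rewrite excess; lra.
Qed.

Lemma sqdist_facet_center i k : (i <= m)%N -> (k <= m)%N -> i != k ->
  sqdist (facet_center k) (simplex_vertex i) = 1.
Proof.
move=> i_le_m k_le_m i_neq_k; have M1 := M_gt1.
have M_neq0 : M != 0 by apply/eqP; lra.
have Mm1_neq0 : M - 1 != 0 by apply/eqP; lra.
have Mp1_neq0 : M + 1 != 0 by apply/eqP; lra.
rewrite /sqdist (eq_bigr (fun j : 'I_m => (- t * (i == j :> nat)%:R
   + - (t / M) * (k == j :> nat)%:R + (t * shift i + t / M * shift k)) ^+ 2)); last first.
  by move=> j _; rewrite /facet_center /simplex_vertex; field.
rewrite sum_indicators_sqr // /simplex_shift.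
have lt_or_eq l : (l <= m)%N -> (l < m)%N \/ l = m.
  by rewrite leq_eqVlt => /predU1P[]; [right | left].
case: (lt_or_eq i i_le_m) => [-> | i_eq_m]; case: (lt_or_eq k k_le_m) => [-> | k_eq_m].
all: try by move: i_neq_k; rewrite i_eq_m k_eq_m eqxx.
all: rewrite ?i_eq_m ?k_eq_m ?ltnn ?mulr0n ?mulr1n.
all: have := t_sqr; have := r_sqr; move: t r => T A a2 t2.
- transitivity (T ^+ 2 * (1 + 1 / M ^+ 2 + (M + 1) ^+ 2 / M ^+ 3 * (A ^+ 2 - 1))).
    by field.
  by rewrite t2 a2; field; rewrite M_neq0 Mm1_neq0 Mp1_neq0.
- transitivity (T ^+ 2 * ((M - 1) / M)); first by field.
  by rewrite t2; field; rewrite M_neq0 Mm1_neq0.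
- transitivity (T ^+ 2 * ((M - 1) / M ^+ 3 + (M ^+ 2 - 1) ^+ 2 / M ^+ 3 * A ^+ 2)).
    by field.
  by rewrite t2 a2; field; rewrite M_neq0 Mm1_neq0 Mp1_neq0.
Qed.

End RegularSimplex.

Arguments simplex_vertex {F} m l.
Arguments facet_center {F} m l.

Lemma R_gt1_sqdist n (x y : Rn n) : R_gt1 n x y <-> 1 < sqdist x y.
Proof.
have sq_eq : euclid_dist n x y = sqrt (sqdist x y).
  by rewrite /euclid_dist /sqdist; congr sqrt; apply: eq_bigr => i _; rewrite expr2.
rewrite /R_gt1 sq_eq; split => lt1.
  by apply/RltP; apply: sqrt_lt_0_alt; rewrite sqrt_1.
by rewrite -sqrt_1; apply: sqrt_lt_1_alt; split; [exact: Rle_0_1 | exact/RltP].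
Qed.

Lemma R_gt1_two_steps n (x y : Rn n) : (0 < n)%N ->
  exists z, R_gt1 n x z /\ R_gt1 n z y.
Proof.
case: n x y => // n x y _; exists (fun j => `|x j| + `|y j| + 2).
have far (a b : R) : 1 < (`|a| + `|b| + 2 - a) ^+ 2.
  have : 2 <= `|a| + `|b| + 2 - a by have := ler_norm a; have := normr_ge0 b; lra.
  by move: (`|a| + `|b| + 2 - a) => d d_ge2; nra.
split; apply/R_gt1_sqdist; apply: lt_le_trans (sqr_sub_le_sqdist _ _ ord0).
  by rewrite -sqrrN opprB far.
by rewrite [`|x ord0| + _]addrC far.
Qed.

Fixpoint any_of (s : seq nat) : Defs.form :=
  if s is p :: s' then Imp (Imp (Var p) Bot) (any_of s') else Bot.

Definition ball_form (s : seq nat) : Defs.form := Dia (Dia (Imp (Dia (any_of s)) Bot)).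

Definition helly_form (k : nat) : Defs.form :=
  foldr Imp (ball_form (iota 0 k))
    [seq ball_form [seq l <- iota 0 k | l != i] | i <- iota 0 k].

Section KripkeSemantics.
Variables (X : Type) (Rel : X -> X -> Prop) (V : nat -> X -> Prop).

Lemma sat_any_of x s : sat Rel V x (any_of s) <-> exists2 p, p \in s & V p x.
Proof.
elim: s => [|q s IH] /=; first by split=> // [[]].
split=> [any_qs | [p]].
  have [Vq | nVq] := classic (V q x); first by exists q; rewrite ?mem_head.
  by have [p p_s Vp] := IH.1 (any_qs nVq); exists p; rewrite // in_cons p_s orbT.
rewrite in_cons => /predU1P[-> Vq nVq | p_s Vp _]; first by case: (nVq Vq).
by apply/IH; exists p.
Qed.

Lemma sat_ball_form x s : sat Rel V x (ball_form s) <->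
  exists z y, [/\ Rel x z, Rel z y & forall w p, Rel y w -> p \in s -> ~ V p w].
Proof.
split=> [[z [xz [y [zy avoid]]]] | [z [y [xz zy avoid]]]].
  exists z, y; split=> // w p yw p_s Vp; apply: avoid.
  by exists w; split=> //; apply/sat_any_of; exists p.
exists z; split=> //; exists y; split=> // [[w [yw /sat_any_of [p p_s Vp]]]].
exact: avoid yw p_s Vp.
Qed.

Lemma sat_foldr_Imp x (f : nat -> Defs.form) b s :
  sat Rel V x (foldr Imp b [seq f i | i <- s]) <->
  ((forall i, i \in s -> sat Rel V x (f i)) -> sat Rel V x b).
Proof.
elim: s => [|i s IH] /=; first by split=> [b_x _ | imp]; [exact: b_x | apply: imp].
split=> [imp all_f | imp f_i].
  apply: IH.1 (imp (all_f i (mem_head i s))) _ => j j_s.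
  by apply: all_f; rewrite in_cons j_s orbT.
apply/IH => all_f; apply: imp => j; rewrite in_cons => /predU1P[-> // | j_s].
exact: all_f.
Qed.

End KripkeSemantics.

Section EuclideanSemantics.
Variables (n : nat) (V : nat -> Rn n -> Prop).
Hypothesis n_gt0 : (0 < n)%N.

Lemma sat_ball_form_Rn x s : sat (R_gt1 n) V x (ball_form s) <->
  exists c : Rn n, forall p w, p \in s -> V p w -> sqdist c w <= 1.
Proof.
rewrite sat_ball_form; split=> [[z [c [_ _ avoid]]] | [c c_near]].
  exists c => p w p_s Vw; rewrite leNgt; apply/negP => /R_gt1_sqdist cw.
  exact: avoid cw p_s Vw.
have [z [xz zc]] := R_gt1_two_steps x c n_gt0.
exists z, c; split=> // w p /R_gt1_sqdist cw p_s /(c_near p w p_s).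
by rewrite leNgt cw.
Qed.

Lemma sat_helly_form_Rn x k : sat (R_gt1 n) V x (helly_form k) <->
  ((forall i, (i < k)%N -> exists c : Rn n,
      forall l w, (l < k)%N -> l != i -> V l w -> sqdist c w <= 1) ->
   exists c : Rn n, forall l w, (l < k)%N -> V l w -> sqdist c w <= 1).
Proof.
rewrite sat_foldr_Imp sat_ball_form_Rn.
have mem_k l : (l \in iota 0 k) = (l < k)%N by rewrite mem_iota.
split=> [helly_x covers | helly_x covers].
  have [i|c c_near] := helly_x.
    rewrite mem_k => i_k; apply/sat_ball_form_Rn.
    have [c c_near] := covers i i_k; exists c => l w.
    by rewrite mem_filter mem_k => /andP[l_i l_k]; apply: c_near.
  by exists c => l w; rewrite -mem_k; apply: c_near.
have [i i_k|c c_near] := helly_x.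
  have /sat_ball_form_Rn [c c_near] :
      sat (R_gt1 n) V x (ball_form [seq l <- iota 0 k | l != i]).
    by apply: covers; rewrite mem_k.
  by exists c => l w l_k l_i; apply: c_near; rewrite mem_filter l_i mem_k.
by exists c => l w; rewrite mem_k; apply: c_near.
Qed.

End EuclideanSemantics.

Lemma Log_gt1_helly_form n k : (0 < n)%N -> (n.+1 < k)%N -> Log_gt1 n (helly_form k).
Proof.
move=> n_gt0 n_lt_k V x; apply/sat_helly_form_Rn => // covers.
pose C (l : 'I_k) (c : Rn n) := forall w, V l w -> sqdist c w <= 1.
have C_convex l : convex (C l).
  move=> k' P y p y_in comb w Vw.
  exact: convex_sqdist_ball (fun i Pi => y_in i Pi w Vw) comb.
have C_cover (i : 'I_k) : exists c, forall l, l != i -> C l c.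
  have [c c_near] := covers i (ltn_ord i).
  by exists c => l l_i w; apply: c_near.
have [c c_in] := helly n_lt_k C_convex C_cover.
by exists c => l w l_k; apply: (c_in (Ordinal l_k)).
Qed.

Lemma not_Log_gt1_helly_form m : (1 < m)%N -> ~ Log_gt1 m (helly_form m.+1).
Proof.
move=> m_gt1 valid.
pose V l (w : Rn m) := (l <= m)%N /\ w = simplex_vertex m l.
have helly_V := (sat_helly_form_Rn V (ltnW m_gt1) _ _).1 (valid V (simplex_vertex m 0)).
have [i i_le_m | c c_near] := helly_V.
  exists (facet_center m i) => l w l_le_m l_i [_ ->].
  by rewrite (sqdist_facet_center R m_gt1 l_le_m i_le_m l_i).
apply: (@simplex_not_in_unit_ball R m m_gt1 c) => l l_le_m.
by apply: (c_near l _ l_le_m).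
Qed.

Lemma Log_gt1_not_subset n m : (0 < n)%N -> (n < m)%N ->
  ~ (forall phi, Log_gt1 n phi -> Log_gt1 m phi).
Proof.
move=> n_gt0 n_lt_m incl; have m_gt1 : (1 < m)%N by apply: leq_ltn_trans n_lt_m.
by apply: (not_Log_gt1_helly_form m_gt1); apply/incl/Log_gt1_helly_form.
Qed.

Theorem theorem3p3 :
  (forall n m : nat, (1 <= n)%coq_nat -> (n < m)%coq_nat ->
     ~ (forall phi : Defs.form, Log_gt1 n phi -> Log_gt1 m phi)) /\
  (forall n m : nat, (1 <= n)%coq_nat -> (1 <= m)%coq_nat -> n <> m ->
     ~ (forall phi : Defs.form, Log_gt1 n phi <-> Log_gt1 m phi)).
Proof.
split=> [n m /ssrnat.leP n_gt0 /ssrnat.ltP | n m /ssrnat.leP n_gt0 /ssrnat.leP m_gt0].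
  exact: Log_gt1_not_subset.
move=> n_neq_m same.
case: (ltngtP n m) => [n_lt_m | m_lt_n | n_eq_m]; last exact: n_neq_m.
  by apply: (Log_gt1_not_subset n_gt0 n_lt_m) => phi /same.
by apply: (Log_gt1_not_subset m_gt0 m_lt_n) => phi /same.
Qed.
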